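(* Let $X,Y$ be random variables on finite alphabets $\mathcal{X},\mathcal{Y}$ with $I(X;Y)=0$, and let $Z=(X,Y)$ (a random variable on $\mathcal{Z}=\mathcal{X}\times\mathcal{Y}$). Then $\operatorname{Red}(X,Y\to Z)=0$, where $\operatorname{Red}$ is the redundant information defined below.
   Context: For each $y\in\mathcal{Y}$ with $\Pr(Y=y)>0$, let $(A_y,B_y,C_y)$ be the random triple on $\mathcal{X}\times\mathcal{Y}\times\mathcal{Z}$ with $\Pr(A_y=x,B_y=y',C_y=z)=0$ if $\Pr(Z=z)=0$ and $\Pr(A_y=x,B_y=y',C_y=z)=\Pr(X=x,Y=y',Z=z)\Pr(Z=z\mid Y=y)/\Pr(Z=z)$ otherwise. The unique information is $\operatorname{Un}(X\to Z\mid Y)=\sum_{y:\Pr(Y=y)>0}\Pr(Y=y)\,I(A_y;C_y)$ and the redundant information is $\operatorname{Red}(X,Y\to Z)=I(X;Z)-\operatorname{Un}(X\to Z\mid Y)$, where $I$ is mutual information. *)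

From mathcomp Require Import all_boot all_order all_algebra.
From mathcomp Require Import reals exp.
Set Implicit Arguments. Unset Strict Implicit. Unset Printing Implicit Defensive.
Import Order.TTheory GRing.Theory Num.Theory.
Local Open Scope ring_scope.

Section InfoDefs.
Variable R : realType.

Definition is_pmf2 (A B : finType) (p : A -> B -> R) : Prop :=
  (forall a b, 0 <= p a b) /\ \sum_(a : A) \sum_(b : B) p a b = 1.

Definition MI (A B : finType) (p : A -> B -> R) : R :=
  \sum_(a : A) \sum_(b : B)
     (if 0 < p a b then
        p a b * ln (p a b / ((\sum_(b' : B) p a b') * (\sum_(a' : A) p a' b)))
      else 0).

Variables (X Y Z : finType) (P : X -> Y -> Z -> R).

Definition PrY (y : Y) : R := \sum_(x : X) \sum_(z : Z) P x y z.
Definition PrZ (z : Z) : R := \sum_(x : X) \sum_(y : Y) P x y z.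
Definition PrYZ (y : Y) (z : Z) : R := \sum_(x : X) P x y z.

Definition condZY (z : Z) (y : Y) : R := PrYZ y z / PrY y.

Definition triple_y (y : Y) (x : X) (y' : Y) (z : Z) : R :=
  if PrZ z == 0 then 0 else P x y' z * condZY z y / PrZ z.

Definition AC_y (y : Y) (x : X) (z : Z) : R := \sum_(y' : Y) triple_y y x y' z.

Definition Un : R := \sum_(y : Y | 0 < PrY y) PrY y * MI (AC_y y).

Definition IXZ : R := MI (fun x z => \sum_(y : Y) P x y z).

Definition Red : R := IXZ - Un.

End InfoDefs.

Definition pair_triple (R : realType) (X Y : finType) (p : X -> Y -> R)
  : X -> Y -> (X * Y)%type -> R :=
  fun x y z => if z == (x, y) then p x y else 0.

From mathcomp Require Import all_boot all_order all_algebra.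
From mathcomp Require Import reals exp.
From mathcomp Require Import ring.
Import Order.TTheory GRing.Theory Num.Theory.
Local Open Scope ring_scope.

(* For Z = (X, Y), the variable X is a function of Z, so I(X;Z) = H(X); and
   conditioned on Y = y the pair (A_y, C_y) is X given Y = y together with
   C_y = (A_y, y), so I(A_y;C_y) = H(X | Y = y) and Un(X -> Z | Y) = H(X|Y).
   Hence Red(X,Y -> (X,Y)) = H(X) - H(X|Y) = I(X;Y), which vanishes by
   hypothesis.  This identity only needs p >= 0, not its normalization. *)

Section MutualInformation.
Context {R : realType}.

Lemma sumr_single {I : finType} (j : I) (F : I -> R) :
  (forall i, i != j -> F i = 0) -> \sum_i F i = F j.
Proof. by move=> F0; rewrite (bigD1 j) //= big1 ?addr0. Qed.

Lemma sumr_pair {A B : finType} (F : A * B -> R) :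
  \sum_z F z = \sum_a \sum_b F (a, b).
Proof. by rewrite pair_bigA; apply: eq_bigr => -[]. Qed.

Lemma ler_term_sum {I : finType} (j : I) (F : I -> R) :
  (forall i, 0 <= F i) -> F j <= \sum_i F i.
Proof. by move=> F_ge0; rewrite (bigD1 j) //= lerDl sumr_ge0. Qed.

Lemma MI_term_split (v s t : R) : 0 <= v -> (0 < v -> 0 < s /\ 0 < t) ->
  (if 0 < v then v * ln (v / (s * t)) else 0) = v * (ln v - ln s - ln t).
Proof.
move=> v_ge0 st_gt0; case: ifPn => [v_gt0|].
  have [s_gt0 t_gt0] := st_gt0 v_gt0.
  by rewrite ln_div ?lnM ?posrE ?mulr_gt0 //; ring.
rewrite -leNgt => v_le0.
have -> : v = 0 by apply: le_anti; rewrite v_le0 v_ge0.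
by rewrite mul0r.
Qed.

Lemma eq_MI {A B : finType} {f g : A -> B -> R} : f =2 g -> MI f = MI g.
Proof.
move=> fg; rewrite /MI; apply: eq_bigr => a _; apply: eq_bigr => b _.
by rewrite fg (eq_bigr _ (fun b' _ => fg a b'))
           (eq_bigr _ (fun a' _ => fg a' b)).
Qed.

Lemma MI_expand (A B : finType) (p : A -> B -> R) : (forall a b, 0 <= p a b) ->
  MI p = \sum_a \sum_b
           p a b * (ln (p a b) - ln (\sum_b' p a b') - ln (\sum_a' p a' b)).
Proof.
move=> p_ge0; rewrite /MI; apply: eq_bigr => a _; apply: eq_bigr => b _.
apply: MI_term_split => // p_gt0.
by split; apply: lt_le_trans p_gt0 _; apply: ler_term_sum.
Qed.

Lemma MI_fst_determined {A B : finType} (r : A -> B -> R) :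
  (forall a b, 0 <= r a b) ->
  MI (fun x (z : A * B) => if z.1 == x then r x z.2 else 0)
  = - \sum_a \sum_b r a b * ln (\sum_b' r a b').
Proof.
move=> r_ge0; rewrite /MI -sumrN; apply: eq_bigr => x _.
have row : \sum_(z : A * B) (if z.1 == x then r x z.2 else 0) = \sum_b r x b.
  rewrite sumr_pair (sumr_single x) => [|a ax].
    by under eq_bigr do rewrite eqxx.
  by apply: big1 => b _; rewrite (negbTE ax).
rewrite row sumr_pair (sumr_single x) => [|a ax]; last first.
  by apply: big1 => b _ /=; rewrite (negbTE ax) ltxx.
rewrite -sumrN; apply: eq_bigr => b _ /=.
have col : \sum_x' (if x == x' then r x' b else 0) = r x b.
  by rewrite (sumr_single x) ?eqxx // => x' /negbTE; rewrite eq_sym => ->.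
rewrite eqxx col MI_term_split //; first by ring.
by move=> r_gt0; split => //; apply: lt_le_trans r_gt0 _; apply: ler_term_sum.
Qed.

End MutualInformation.

Section PairTriple.
Variables (R : realType) (X Y : finType) (p : X -> Y -> R).
Hypothesis p_ge0 : forall x y, 0 <= p x y.

Lemma pair_tripleE x y a b :
  pair_triple p x y (a, b) = if (a == x) && (b == y) then p x y else 0.
Proof. by rewrite /pair_triple xpair_eqE. Qed.

Lemma PrY_pair_triple y : PrY (pair_triple p) y = \sum_x p x y.
Proof.
apply: eq_bigr => x _; rewrite sumr_pair (sumr_single x) => [|a ax].
  rewrite (sumr_single y) => [|b yb]; rewrite pair_tripleE ?eqxx //.
  by rewrite (negbTE yb) andbF.
by apply: big1 => b _; rewrite pair_tripleE (negbTE ax).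
Qed.

Lemma PrZ_pair_triple a b : PrZ (pair_triple p) (a, b) = p a b.
Proof.
rewrite /PrZ (sumr_single a) => [|x xa].
  rewrite (sumr_single b) => [|y yb]; rewrite pair_tripleE ?eqxx //.
  by rewrite (eq_sym b) (negbTE yb) andbF.
by apply: big1 => y _; rewrite pair_tripleE eq_sym (negbTE xa).
Qed.

Lemma PrYZ_pair_triple y a b :
  PrYZ (pair_triple p) y (a, b) = if b == y then p a b else 0.
Proof.
rewrite /PrYZ (sumr_single a) => [|x xa]; last first.
  by rewrite pair_tripleE eq_sym (negbTE xa).
by rewrite pair_tripleE eqxx; case: eqP => // ->.
Qed.

Lemma sum_pair_triple x z :
  \sum_y pair_triple p x y z = if z.1 == x then p x z.2 else 0.
Proof.
case: z => a b /=; rewrite (sumr_single b) => [|y yb]; last first.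
  by rewrite pair_tripleE (eq_sym b) (negbTE yb) andbF.
by rewrite pair_tripleE eqxx andbT; case: eqP => // ->.
Qed.

Lemma AC_y_pair_triple y x z : AC_y (pair_triple p) y x z =
  if z.1 == x then (if z.2 == y then p x y / \sum_x' p x' y else 0) else 0.
Proof.
case: z => a b /=; rewrite /AC_y (sumr_single b) => [|y' yb]; last first.
  rewrite /triple_y pair_tripleE (eq_sym b) (negbTE yb) andbF !mul0r.
  by case: ifP.
rewrite /triple_y PrZ_pair_triple /condZY PrYZ_pair_triple PrY_pair_triple.
rewrite pair_tripleE eqxx andbT.
have [->|ax] := eqVneq a x; last by case: ifP => _ //; rewrite !mul0r.
have [->|_] := eqVneq b y; last by case: ifP; rewrite ?mul0r ?mulr0 ?mul0r.
by case: ifPn => [/eqP ->|px0]; rewrite ?mul0r // [p x y * _]mulrC mulfK.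
Qed.

Lemma IXZ_pair_triple :
  IXZ (pair_triple p) = - \sum_x \sum_y p x y * ln (\sum_y' p x y').
Proof. by rewrite /IXZ (eq_MI sum_pair_triple) MI_fst_determined. Qed.

Lemma MI_AC_y_pair_triple y : 0 < \sum_x p x y ->
  (\sum_x p x y) * MI (AC_y (pair_triple p) y)
  = \sum_x p x y * (ln (\sum_x' p x' y) - ln (p x y)).
Proof.
move=> q_gt0; pose r x b := if b == y then p x y / \sum_x' p x' y else 0.
rewrite (eq_MI (AC_y_pair_triple y)) (MI_fst_determined r); last first.
  by move=> x b; rewrite /r; case: ifP => // _; rewrite divr_ge0 // ltW.
rewrite /r mulrN mulr_sumr -sumrN; apply: eq_bigr => x _.
rewrite !(sumr_single y) ?eqxx => [|b yb|b yb]; rewrite ?(negbTE yb) ?mul0r //.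
have [->|px0] := eqVneq (p x y) 0; first by rewrite !mul0r mulr0 oppr0.
have px_gt0 : 0 < p x y by rewrite lt_neqAle eq_sym px0 p_ge0.
by rewrite ln_div ?posrE //; field; rewrite gt_eqF.
Qed.

Lemma Un_pair_triple : Un (pair_triple p)
  = \sum_x \sum_y p x y * (ln (\sum_x' p x' y) - ln (p x y)).
Proof.
rewrite /Un big_mkcond exchange_big; apply: eq_bigr => y _ /=.
rewrite PrY_pair_triple; case: ifPn => [|q_le0].
  exact: MI_AC_y_pair_triple.
suff p0 x : p x y = 0 by symmetry; apply: big1 => x _; rewrite p0 mul0r.
apply: le_anti; rewrite p_ge0 andbT.
by apply: le_trans (ler_term_sum x _ (p_ge0^~ y)) _; rewrite leNgt.
Qed.

Lemma Red_pair_triple : Red (pair_triple p) = MI p.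
Proof.
rewrite /Red IXZ_pair_triple Un_pair_triple MI_expand // -sumrN -sumrB.
apply: eq_bigr => x _; rewrite -sumrN -sumrB; apply: eq_bigr => y _; ring.
Qed.

End PairTriple.

Theorem lemma10 (R : realType) (X Y : finType) (p : X -> Y -> R) :
  is_pmf2 p -> MI p = 0 -> Red (pair_triple p) = 0.
Proof. by move=> [p_ge0 _] <-; exact: Red_pair_triple. Qed.
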